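(* Let MSCQ hold at $\bar x$ with modulus $\sigma>0$. Let $x_k\in\Gamma$ with $x_k\to\bar x$, $x_k^*\to0$, $\lambda^k\to\tilde\lambda$ and $u_k\to\tilde u$ be sequences such that for all $k\in\mathbb N$ $$\lambda^k\in\Lambda\big(x_k,x_k^*-\nabla f(x_k);u_k\big)\cap\sigma\|x_k^*-\nabla f(x_k)\|\mathbb B,\qquad u_k\in K_\Gamma\big(x_k,x_k^*-\nabla f(x_k)\big)\cap\mathcal S,$$ and $\limsup_{k\to\infty}\langle\mathcal H(x_k,\lambda^k)u_k,u_k\rangle<\infty$. Then $$\tilde\lambda\in\Lambda\big(\bar x,-\nabla f(\bar x)\big)\cap\sigma\|\nabla f(\bar x)\|\mathbb B\subset\Lambda^0\big(\bar x,-\nabla f(\bar x)\big),$$ $$\tilde u\in\mathcal S,\quad\langle\tilde\lambda,\nabla g(\bar x)\tilde u\rangle=0,\quad\tilde\lambda_0\big(\|\nabla g_r(\bar x)\tilde u\|^2-(\nabla g_0(\bar x)\tilde u)^2\big)=0.$$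
   Context: Setting. Let $n,m\ge1$ and let $\mathcal Q:=\{(q_0,q_r)\in\mathbb R\times\mathbb R^m:\|q_r\|\le q_0\}$ be the second-order cone. For $q=(q_0,q_r)\in\mathbb R^{1+m}$ write $\hat q:=(-q_0,q_r)$, and let $\mathcal Q^*:=\{\hat q: q\in\mathcal Q\}=\{(q_0,q_r):\|q_r\|\le-q_0\}$. The normal cone to $\mathcal Q$ at $q\in\mathcal Q$ is $N_{\mathcal Q}(q)=\mathcal Q^*$ if $q=0$, $N_{\mathcal Q}(q)=\{0\}$ if $q\in\operatorname{int}\mathcal Q$, and $N_{\mathcal Q}(q)=\{\alpha\hat q:\alpha\ge0\}$ if $q\in\operatorname{bd}\mathcal Q\setminus\{0\}$. Problem (P) is: minimize $f(x)$ subject to $x\in\Gamma:=\{x\in\mathbb R^n: g(x)\in\mathcal Q\}$, where $f:\mathbb R^n\to\mathbb R$ and $g=(g_0,g_r):\mathbb R^n\to\mathbb R\times\mathbb R^m$ are $C^2$-smooth around a point $\bar x\in\Gamma$ with $g(\bar x)=0$. $\nabla g(x)$ is the Jacobian, $\nabla g(x)^*$ its transpose, $\nabla^2 g(x)(u,v)\in\mathbb R^{1+m}$ is the vector with components $u^T\nabla^2 g_i(x)v$, and $\nabla^2\langle\lambda,g\rangle(x)=\sum_i\lambda_i\nabla^2 g_i(x)$. $\mathcal S$ is the unit sphere, $\mathbb B$ the closed unit ball, and $r\mathbb B$ the closed ball of radius $r$ about $0$. MSCQ. The metric subregularity constraint qualification (MSCQ) holds at $\bar x$ with modulus $\sigma>0$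 if there is a neighborhood $U$ of $\bar x$ with $\operatorname{dist}(x;\Gamma)\le\sigma\operatorname{dist}(g(x);\mathcal Q)$ for all $x\in U$. Multipliers and cones. $T_\Gamma(x)$ is the Bouligand tangent cone $\{v:\exists t_k\downarrow0,\ v_k\to v,\ x+t_kv_k\in\Gamma\}$. For $x\in\Gamma$, $x^*\in\mathbb R^n$: $\Lambda(x,x^* ):=\{\lambda\in N_{\mathcal Q}(g(x)):\nabla g(x)^*\lambda=x^*\}$; $\Lambda^0(x,x^* ):=\{0\}$ if $x^*=0$ and $\Lambda^0(x,x^* ):=\Lambda(x,x^* )$ otherwise; the critical cone is $K_\Gamma(x,x^* ):=\{u\in T_\Gamma(x):\langle x^*,u\rangle=0\}$. The curvature mapping is $\mathcal H(x,\lambda):=\frac{-\lambda_0}{g_0(x)}\big(\nabla g_r(x)^*\nabla g_r(x)-\nabla g_0(x)^*\nabla g_0(x)\big)$ if $g(x)\in\operatorname{bd}\mathcal Q\setminus\{0\}$ and $\mathcal H(x,\lambda):=0$ otherwise. The directional multiplier set is $\Lambda(x,x^*;u):=\operatorname{argmax}_{\lambda\in\Lambda(x,x^* )}\langle(\nabla^2\langle\lambda,g\rangle(x)+\mathcal H(x,\lambda))u,u\rangle$. *)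

From Stdlib Require Import Reals ClassicalEpsilon.
From mathcomp Require Import all_boot.
Set Implicit Arguments. Unset Strict Implicit. Unset Printing Implicit Defensive.
Local Open Scope R_scope.

Definition Vec (n : nat) := 'I_n -> R.
Definition Mat (n : nat) := 'I_n -> 'I_n -> R.

Definition vsum n (f : 'I_n -> R) : R := foldr Rplus 0 (map f (enum 'I_n)).
Definition dot n (u v : Vec n) : R := vsum (fun i => u i * v i).
Definition vnorm n (u : Vec n) : R := sqrt (dot u u).
Definition vzero n : Vec n := fun _ => 0.
Arguments vzero : clear implicits.
Definition vadd n (u v : Vec n) : Vec n := fun i => u i + v i.
Definition vsub n (u v : Vec n) : Vec n := fun i => u i - v i.
Definition vopp n (u : Vec n) : Vec n := fun i => - u i.
Definition vscale n (a : R) (u : Vec n) : Vec n := fun i => a * u i.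
Definition matvec n (M : Mat n) (u : Vec n) : Vec n :=
  fun a => vsum (fun b => M a b * u b).
Definition madd n (M N : Mat n) : Mat n := fun a b => M a b + N a b.
Definition quad n (M : Mat n) (u : Vec n) : R := dot (matvec M u) u.

(* R^{1+m} = Vec m.+1 ; component 0 is q_0, the others form q_r *)
Definition hd m (q : Vec m.+1) : R := q ord0.
Definition tl m (q : Vec m.+1) : Vec m := fun i => q (lift ord0 i).
Definition hat m (q : Vec m.+1) : Vec m.+1 :=
  fun i => if i == ord0 then - q i else q i.

Definition vlim n (s : nat -> Vec n) (v : Vec n) : Prop :=
  Un_cv (fun k => vnorm (vsub (s k) v)) 0.

Definition ball n (c : Vec n) (r : R) (x : Vec n) : Prop := vnorm (vsub x c) < r.

Definition has_grad n (F : Vec n -> R) (x : Vec n) (G : Vec n) : Prop :=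
  forall eps, 0 < eps -> exists d, 0 < d /\
    forall h, vnorm h < d -> Rabs (F (vadd x h) - F x - dot G h) <= eps * vnorm h.

Definition cont_at n (F : Vec n -> R) (x : Vec n) : Prop :=
  forall eps, 0 < eps -> exists d, 0 < d /\
    forall y, vnorm (vsub y x) < d -> Rabs (F y - F x) < eps.

Definition C2_near n (F : Vec n -> R) (dF : Vec n -> Vec n) (d2F : Vec n -> Mat n)
  (xb : Vec n) : Prop :=
  exists r, 0 < r /\ forall x, ball xb r x ->
    has_grad F x (dF x) /\
    (forall a, has_grad (fun y => dF y a) x (d2F x a)) /\
    (forall a b, cont_at (fun y => d2F y a b) x).

Definition is_inf (A : R -> Prop) (d : R) : Prop :=
  (forall a, A a -> d <= a) /\ (forall d', (forall a, A a -> d' <= a) -> d' <= d).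
Definition dist n (S : Vec n -> Prop) (x : Vec n) : R :=
  epsilon (inhabits 0) (fun d => is_inf (fun a => exists y, S y /\ a = vnorm (vsub x y)) d).

Definition inQ m (q : Vec m.+1) : Prop := vnorm (tl q) <= hd q.
Definition inQstar m (q : Vec m.+1) : Prop := vnorm (tl q) <= - hd q.
Definition intQ m (q : Vec m.+1) : Prop := vnorm (tl q) < hd q.
Definition bdQ m (q : Vec m.+1) : Prop := vnorm (tl q) = hd q.

(* normal cone N_Q(q), for q in Q *)
Definition NQ m (q lam : Vec m.+1) : Prop :=
  (q = vzero m.+1 /\ inQstar lam) \/
  (intQ q /\ lam = vzero m.+1) \/
  (bdQ q /\ q <> vzero m.+1 /\ exists a, 0 <= a /\ lam = vscale a (hat q)).

Section Constr.
Variables (n m : nat) (g : Vec n -> Vec m.+1) (dg : Vec n -> 'I_m.+1 -> Vec n)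
  (d2g : Vec n -> 'I_m.+1 -> Mat n).

Definition Gamma (x : Vec n) : Prop := inQ (g x).

Definition jacT (x : Vec n) (lam : Vec m.+1) : Vec n :=
  fun j => vsum (fun i => lam i * dg x i j).
Definition jacv (x : Vec n) (u : Vec n) : Vec m.+1 := fun i => dot (dg x i) u.

Definition Lambda (x xs : Vec n) (lam : Vec m.+1) : Prop :=
  NQ (g x) lam /\ jacT x lam = xs.

Definition Lambda0 (x xs : Vec n) (lam : Vec m.+1) : Prop :=
  (xs = vzero n /\ lam = vzero m.+1) \/ (xs <> vzero n /\ Lambda x xs lam).

Definition Tcone (x v : Vec n) : Prop :=
  exists (t : nat -> R) (vs : nat -> Vec n),
    (forall k, 0 < t k) /\ Un_cv t 0 /\ vlim vs v /\
    (forall k, Gamma (vadd x (vscale (t k) (vs k)))).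

Definition Kcone (x xs u : Vec n) : Prop := Tcone x u /\ dot xs u = 0.

Definition Hcurv (x : Vec n) (lam : Vec m.+1) : Mat n :=
  if excluded_middle_informative (bdQ (g x) /\ g x <> vzero m.+1) then
    fun a b => (- hd lam / hd (g x)) *
      (vsum (fun i : 'I_m => dg x (lift ord0 i) a * dg x (lift ord0 i) b)
       - dg x ord0 a * dg x ord0 b)
  else fun _ _ => 0.

Definition hessL (x : Vec n) (lam : Vec m.+1) : Mat n :=
  fun a b => vsum (fun i => lam i * d2g x i a b).

Definition LambdaDir (x xs u : Vec n) (lam : Vec m.+1) : Prop :=
  Lambda x xs lam /\
  forall mu, Lambda x xs mu ->
    quad (madd (hessL x mu) (Hcurv x mu)) u <= quad (madd (hessL x lam) (Hcurv x lam)) u.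

Definition MSCQ (xb : Vec n) (sigma : R) : Prop :=
  exists r, 0 < r /\ forall x, ball xb r x -> dist Gamma x <= sigma * dist (@inQ m) (g x).

End Constr.

From Stdlib Require Import Reals ClassicalEpsilon Lra Lia Psatz FunctionalExtensionality Classical.
From mathcomp Require Import all_boot zify.
Set Implicit Arguments. Unset Strict Implicit.
Local Open Scope R_scope.

(* Write w_k := x*_k - grad f(x_k) -> -grad f(xb) and d_k := grad g(x_k) u_k.
   - Continuity of grad f, grad g and g at xb, together with closedness of Q*
     and of the equation grad g(x)^* lam = w, shows that the limit multiplier
     lamt lies in Lambda(xb, -grad f(xb)) and satisfies the norm bound; here
     N_Q(g(xb)) is all of Q* because g(xb) = 0.
   - <lam_k, d_k> = <w_k, u_k> = 0 on the critical cone; passing to the limit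
     gives the complementarity <lamt, grad g(xb) ut> = 0.
   - For the last claim write gap(d) := |d_r|^2 - d_0^2.  If lamt_0 < 0, then
     eventually lam^k_0 < -c < 0, and a case split on the normal cone gives
     0 <= gap(d_k) <= (max M 0 / c) g_0(x_k): if g(x_k) = 0, d_k lies in Q
     (the tangent cone of Q at 0) and is orthogonal to lam_k, an element of Q*
     with negative head, so gap(d_k) = 0; if
     g(x_k) is a nonzero boundary point, <H(x_k,lam_k)u_k,u_k> = a_k gap(d_k)
     with a_k g_0(x_k) = -lam^k_0 > c, which gives the bound.  Since
     g_0(x_k) -> 0, gap(grad g(xb) ut) = 0. *)

Definition lsum (T : Type) (s : seq T) (f : T -> R) : R := foldr Rplus 0 (map f s).

Lemma vsumE n (f : 'I_n -> R) : vsum f = lsum (enum 'I_n) f.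
Proof. by []. Qed.

Lemma lsum_ext T (s : seq T) f g : (forall i, f i = g i) -> lsum s f = lsum s g.
Proof. by move=> E; rewrite /lsum; elim: s => //= a s ->; rewrite E. Qed.

Lemma lsum_zero T (s : seq T) : lsum s (fun _ => 0) = 0.
Proof. by rewrite /lsum; elim: s => //= a s ->; ring. Qed.

Lemma lsum_add T (s : seq T) f g : lsum s (fun i => f i + g i) = lsum s f + lsum s g.
Proof. by rewrite /lsum; elim: s => /= [|a s ->]; ring. Qed.

Lemma lsum_sub T (s : seq T) f g : lsum s (fun i => f i - g i) = lsum s f - lsum s g.
Proof. by rewrite /lsum; elim: s => /= [|a s ->]; ring. Qed.

Lemma lsum_mull T (s : seq T) c f : lsum s (fun i => c * f i) = c * lsum s f.
Proof. by rewrite /lsum; elim: s => /= [|a s ->]; ring. Qed.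

Lemma lsum_mulr T (s : seq T) c f : lsum s (fun i => f i * c) = lsum s f * c.
Proof. by rewrite /lsum; elim: s => /= [|a s ->]; ring. Qed.

Lemma lsum_map T U (s : seq T) (h : T -> U) f : lsum (map h s) f = lsum s (fun i => f (h i)).
Proof. by rewrite /lsum; elim: s => //= a s ->. Qed.

Lemma lsum_swap T U (s : seq T) (t : seq U) F :
  lsum s (fun a => lsum t (F a)) = lsum t (fun b => lsum s (fun a => F a b)).
Proof.
elim: s => [|a s IH]; first by rewrite /lsum /= -/(lsum t (fun _ => 0)) lsum_zero.
by rewrite /lsum /= -/(lsum s _) IH -/(lsum t _) -lsum_add.
Qed.

Lemma lsum_prod T (s : seq T) f g :
  lsum s f * lsum s g = lsum s (fun a => lsum s (fun b => f a * g b)).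
Proof. by rewrite -lsum_mulr; apply: lsum_ext => a; rewrite -lsum_mull. Qed.

Lemma lsum_ge0 T (s : seq T) f : (forall i, 0 <= f i) -> 0 <= lsum s f.
Proof. by move=> H; rewrite /lsum; elim: s => /= [|a s IH]; [lra | have := H a; lra]. Qed.

Lemma lsum_term (T : eqType) (s : seq T) f i :
  (forall j, 0 <= f j) -> i \in s -> f i <= lsum s f.
Proof.
move=> H; rewrite /lsum; elim: s => //= a s IH; rewrite in_cons => /orP [/eqP ->|Hi].
  by have := lsum_ge0 s H; rewrite /lsum; lra.
by have := IH Hi; have := H a; lra.
Qed.

Lemma cv_lsum T (s : seq T) (F : nat -> T -> R) L :
  (forall i, Un_cv (fun k => F k i) (L i)) -> Un_cv (fun k => lsum s (F k)) (lsum s L).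
Proof.
move=> H; rewrite /lsum; elim: s => /= [|a s IH]; last exact: CV_plus.
by move=> e He; exists 0%nat => k _; rewrite /R_dist Rminus_0_r Rabs_R0.
Qed.

Lemma vsum_split m (f : 'I_m.+1 -> R) : vsum f = f ord0 + vsum (fun i => f (lift ord0 i)).
Proof. by rewrite !vsumE enum_ordSl /lsum /= -/(lsum _ _) lsum_map. Qed.

Lemma dot_comm n (a b : Vec n) : dot a b = dot b a.
Proof. by apply: lsum_ext => i; ring. Qed.

Lemma dot_scale n t (a b : Vec n) : dot (vscale t a) b = t * dot a b.
Proof. by rewrite /dot !vsumE -lsum_mull; apply: lsum_ext => i; rewrite /vscale; ring. Qed.

Lemma dot_scale_r n t (a b : Vec n) : dot a (vscale t b) = t * dot a b.
Proof. by rewrite dot_comm dot_scale dot_comm. Qed.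

Lemma dot_ge0 n (a : Vec n) : 0 <= dot a a.
Proof. by apply: lsum_ge0 => i; apply: Rle_0_sqr. Qed.

Lemma dot_split m (a b : Vec m.+1) : dot a b = hd a * hd b + dot (tl a) (tl b).
Proof. by rewrite /dot vsum_split. Qed.

Lemma dot_vzero n (a : Vec n) : dot (vzero n) a = 0.
Proof. by rewrite /dot vsumE -(lsum_zero (enum 'I_n)); apply: lsum_ext => i; rewrite /vzero; ring. Qed.

Lemma dot_comp_le n (a : Vec n) i : a i * a i <= dot a a.
Proof. by apply: (lsum_term (fun j => Rle_0_sqr (a j))); rewrite mem_enum. Qed.

Lemma cauchy_schwarz n (a b : Vec n) : dot a b * dot a b <= dot a a * dot b b.
Proof.
have quad_ge0 t : 0 <= dot a a - 2 * t * dot a b + t * t * dot b b.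
  have -> : dot a a - 2 * t * dot a b + t * t * dot b b =
      lsum (enum 'I_n) (fun i => (a i - t * b i) * (a i - t * b i)).
    by rewrite /dot !vsumE -!lsum_mull -!lsum_sub -lsum_add; apply: lsum_ext => i; ring.
  by apply: lsum_ge0 => i; apply: Rle_0_sqr.
have [Hb|Hb] := Rle_lt_or_eq_dec _ _ (dot_ge0 b).
  have := quad_ge0 (dot a b / dot b b).
  have -> : dot a a - 2 * (dot a b / dot b b) * dot a b +
      dot a b / dot b b * (dot a b / dot b b) * dot b b =
      (dot a a * dot b b - dot a b * dot a b) * / dot b b by field; lra.
  by move=> H; have := Rinv_0_lt_compat _ Hb; nra.
have b0 i : b i = 0.
  by have := dot_comp_le b i; rewrite -Hb => ?; have := Rle_0_sqr (b i); nra.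
have -> : dot a b = 0.
  by rewrite /dot vsumE -(lsum_zero (enum 'I_n)); apply: lsum_ext => i; rewrite b0; ring.
by rewrite -Hb; lra.
Qed.

Lemma vnorm_ge0 n (a : Vec n) : 0 <= vnorm a.
Proof. exact: sqrt_pos. Qed.

Lemma vnorm_sq n (a : Vec n) : vnorm a * vnorm a = dot a a.
Proof. exact/sqrt_sqrt/dot_ge0. Qed.

Lemma vnorm_le n (a : Vec n) c : 0 <= c -> dot a a <= c * c -> vnorm a <= c.
Proof. by move=> Hc H; rewrite -(sqrt_square c Hc); apply: sqrt_le_1_alt. Qed.

Lemma vnorm_le_sq n (a : Vec n) c : vnorm a <= c -> dot a a <= c * c.
Proof. by move=> H; rewrite -vnorm_sq; have := vnorm_ge0 a; nra. Qed.

Lemma vnorm_vzero n : vnorm (vzero n) = 0.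
Proof. by rewrite /vnorm dot_vzero sqrt_0. Qed.

Lemma vnorm_eq0 n (a : Vec n) : vnorm a = 0 -> a = vzero n.
Proof.
move=> H; apply: functional_extensionality => i; rewrite /vzero.
by have := dot_comp_le a i; rewrite -vnorm_sq H => ?; have := Rle_0_sqr (a i); nra.
Qed.

Lemma vnorm_scale n t (a : Vec n) : 0 <= t -> vnorm (vscale t a) = t * vnorm a.
Proof.
move=> Ht; rewrite /vnorm; have -> : dot (vscale t a) (vscale t a) = (t * t) * dot a a.
  by rewrite dot_scale dot_scale_r; ring.
by rewrite sqrt_mult_alt ?sqrt_square //; apply: Rle_0_sqr.
Qed.

Lemma dot_abs n (a b : Vec n) : Rabs (dot a b) <= vnorm a * vnorm b.
Proof.
have nn := Rmult_le_pos _ _ (vnorm_ge0 a) (vnorm_ge0 b).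
rewrite -(Rabs_pos_eq _ nn); apply: Rsqr_le_abs_0; rewrite /Rsqr.
have := cauchy_schwarz a b; rewrite -!vnorm_sq; lra.
Qed.

Lemma comp_abs_le n (a : Vec n) i : Rabs (a i) <= vnorm a.
Proof.
by rewrite -(sqrt_Rsqr_abs (a i)); apply/sqrt_le_1_alt/dot_comp_le.
Qed.

Definition eventually (P : nat -> Prop) : Prop := exists N, forall k, (N <= k)%N -> P k.

Lemma eventually_and P Q : eventually P -> eventually Q -> eventually (fun k => P k /\ Q k).
Proof.
move=> [N1 H1] [N2 H2]; exists (N1 + N2)%N => k Hk.
by split; [apply: H1 | apply: H2]; lia.
Qed.

Lemma cv_const (c : R) : Un_cv (fun _ => c) c.
Proof. by move=> e He; exists 0%nat => k _; rewrite /R_dist Rminus_diag Rabs_R0. Qed.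

Lemma cv_ext (u w : nat -> R) l : (forall k, u k = w k) -> Un_cv u l -> Un_cv w l.
Proof. by move=> E H e He; have [N HN] := H e He; exists N => k Hk; rewrite -E; apply: HN. Qed.

Lemma cv_le_eventually (u v : nat -> R) a b :
  eventually (fun k => u k <= v k) -> Un_cv u a -> Un_cv v b -> a <= b.
Proof.
move=> [N HN] Hu Hv; apply: Rnot_lt_le => Hab.
have [N1 H1] := Hu ((a - b) / 2) ltac:(lra); have [N2 H2] := Hv ((a - b) / 2) ltac:(lra).
have := HN (N + N1 + N2)%N ltac:(lia).
have := H1 (N + N1 + N2)%N ltac:(lia); have := H2 (N + N1 + N2)%N ltac:(lia).
rewrite /R_dist => /Rabs_def2 [? ?] /Rabs_def2 [? ?]; lra.
Qed.

Lemma cv_eventually_lt (u : nat -> R) a c : Un_cv u a -> a < c -> eventually (fun k => u k < c).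
Proof.
move=> Hu Hac; have [N HN] := Hu (c - a) ltac:(lra); exists N => k /leP Hk.
by have := HN k Hk; rewrite /R_dist => /Rabs_def2; lra.
Qed.

Lemma vlim_comp n (s : nat -> Vec n) v i : vlim s v -> Un_cv (fun k => s k i) (v i).
Proof.
move=> H e He; have [N HN] := H e He; exists N => k Hk; have := HN k Hk.
rewrite /R_dist Rminus_0_r Rabs_pos_eq; last exact: vnorm_ge0.
by have := comp_abs_le (vsub (s k) v) i; rewrite /vsub; lra.
Qed.

Lemma cv_dot n (a b : nat -> Vec n) A B : (forall i, Un_cv (fun k => a k i) (A i)) ->
  (forall i, Un_cv (fun k => b k i) (B i)) -> Un_cv (fun k => dot (a k) (b k)) (dot A B).
Proof.
move=> Ha Hb; rewrite /dot !vsumE; apply: (@cv_lsum _ _ (fun k i => a k i * b k i)) => i.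
exact: CV_mult.
Qed.

Lemma cv_vnorm n (a : nat -> Vec n) A : (forall i, Un_cv (fun k => a k i) (A i)) ->
  Un_cv (fun k => vnorm (a k)) (vnorm A).
Proof. by move=> Ha; apply/continuity_seq/cv_dot => //; apply/continuity_pt_sqrt/dot_ge0. Qed.

Lemma lt_div_mul a b c : 0 < c -> a < b / c -> a * c < b.
Proof.
move=> Hc H; have := Rmult_lt_compat_r c _ _ Hc H.
by rewrite /Rdiv Rmult_assoc Rinv_l ?Rmult_1_r; lra.
Qed.

Lemma has_grad_cv n F (x G : Vec n) (y : nat -> Vec n) : has_grad F x G -> vlim y x ->
  Un_cv (fun k => F (y k)) (F x).
Proof.
move=> HF Hy e He; have [d [Hd Hh]] := HF 1 Rlt_0_1.
have HG := vnorm_ge0 G.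
have Hd' : 0 < Rmin d (e / (vnorm G + 2)) by apply: Rmin_pos => //; apply: Rdiv_lt_0_compat; lra.
have [N HN] := Hy _ Hd'; exists N => k Hk; have := HN k Hk.
rewrite /R_dist Rminus_0_r Rabs_pos_eq; last exact: vnorm_ge0.
set h := vsub (y k) x => Hsmall.
have Hhd : vnorm h < d by have := Rmin_l d (e / (vnorm G + 2)); lra.
have Hhe : vnorm h * (vnorm G + 2) < e.
  apply: lt_div_mul; first lra; have := Rmin_r d (e / (vnorm G + 2)); lra.
have -> : y k = vadd x h by apply: functional_extensionality => i; rewrite /vadd /h /vsub; ring.
have Hn := vnorm_ge0 h.
apply: (Rle_lt_trans _ ((vnorm G + 1) * vnorm h)); last nra.
have -> : F (vadd x h) - F x = (F (vadd x h) - F x - dot G h) + dot G h by ring.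
apply: Rle_trans (Rabs_triang _ _) _; have := Hh h Hhd; have := dot_abs G h; lra.
Qed.

Lemma has_grad_dir n F (x G : Vec n) (t : nat -> R) (v : nat -> Vec n) u :
  has_grad F x G -> F x = 0 -> (forall j, 0 < t j) -> Un_cv t 0 -> vlim v u ->
  Un_cv (fun j => F (vadd x (vscale (t j) (v j))) / t j) (dot G u).
Proof.
move=> HF Fx0 Ht Ht0 Hv.
pose r j := F (vadd x (vscale (t j) (v j))) / t j - dot G (v j).
suff Hr : Un_cv r 0.
  have := CV_plus _ _ _ _ Hr
    (@cv_dot _ (fun _ => G) v G u (fun i => cv_const (G i)) (fun i => vlim_comp i Hv)).
  by rewrite Rplus_0_l; apply: cv_ext => j; rewrite /r; ring.
move=> e He.
set B := vnorm u + 1; have HB : 0 < B by have := vnorm_ge0 u; rewrite /B; lra.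
have [d [Hd Hh]] := HF (e / (2 * B)) ltac:(apply: Rdiv_lt_0_compat; lra).
have Hvn := cv_vnorm (fun i => vlim_comp i Hv).
have [N HN] := eventually_and (cv_eventually_lt Hvn (ltac:(rewrite /B; lra) : vnorm u < B))
  (cv_eventually_lt Ht0 (Rdiv_lt_0_compat _ _ Hd HB)).
exists N => j /leP Hj; have [HvB HtB] := HN j Hj.
have Htj := Ht j; have Hvj := vnorm_ge0 (v j).
have HtB' : t j * B < d by apply: lt_div_mul.
have Hsmall : vnorm (vscale (t j) (v j)) < d by rewrite vnorm_scale; nra.
have := Hh _ Hsmall; rewrite Fx0 vnorm_scale ?dot_scale_r; last lra.
have -> : F (vadd x (vscale (t j) (v j))) - 0 - t j * dot G (v j) = t j * r j.
  by rewrite /r; field; lra.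
rewrite /R_dist Rminus_0_r Rabs_mult (Rabs_pos_eq (t j)); last lra.
have -> : e / (2 * B) * (t j * vnorm (v j)) = t j * (e / (2 * B) * vnorm (v j)) by ring.
move=> /(Rmult_le_reg_l _ _ _ Htj) Hle.
have : e / (2 * B) * vnorm (v j) <= e / (2 * B) * B.
  by apply: Rmult_le_compat_l; [apply: Rlt_le; apply: Rdiv_lt_0_compat |]; lra.
have -> : e / (2 * B) * B = e / 2 by field; lra.
lra.
Qed.

(* [cone_sq 1 q] and [cone_sq (-1) q] describe Q and Q* through squared norms:
   |q_r|^2 <= q_0^2 with q_0 >= 0, respectively q_0 <= 0. *)
Definition cone_sq m (s : R) (q : Vec m.+1) : Prop :=
  dot (tl q) (tl q) <= hd q * hd q /\ 0 <= s * hd q.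

(* gap d = |d_r|^2 - d_0^2: zero exactly on the boundary of Q and of -Q. *)
Definition gap m (d : Vec m.+1) : R := dot (tl d) (tl d) - hd d * hd d.

Lemma gap_vnorm m (d : Vec m.+1) : vnorm (tl d) ^ 2 - hd d ^ 2 = gap d.
Proof. by rewrite /gap -vnorm_sq; ring. Qed.

Lemma cv_gap m (d : nat -> Vec m.+1) D : (forall i, Un_cv (fun k => d k i) (D i)) ->
  Un_cv (fun k => gap (d k)) (gap D).
Proof. by move=> H; apply: CV_minus; [apply: cv_dot => i | apply: CV_mult]; apply: H. Qed.

Lemma inQ_sq m (q : Vec m.+1) : inQ q -> cone_sq 1 q.
Proof.
rewrite /inQ => H; split; last by have := vnorm_ge0 (tl q); lra.
exact: vnorm_le_sq.
Qed.

Lemma cone_sq_scale m s t (q : Vec m.+1) : 0 < t -> cone_sq s q -> cone_sq s (vscale t q).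
Proof.
move=> Ht [H1 H2]; rewrite /cone_sq.
have -> : tl (vscale t q) = vscale t (tl q) by [].
rewrite dot_scale dot_scale_r /hd /vscale; rewrite /hd in H1 H2.
by split; nra.
Qed.

Lemma cone_sq_closed m s (q : nat -> Vec m.+1) L : eventually (fun k => cone_sq s (q k)) ->
  (forall i, Un_cv (fun k => q k i) (L i)) -> cone_sq s L.
Proof.
move=> HN H.
have Ht : forall i, Un_cv (fun k => tl (q k) i) (tl L i) by move=> i; apply: H.
have Hh : Un_cv (fun k => hd (q k)) (hd L) by apply: H.
split.
- apply: (cv_le_eventually _ (cv_dot Ht Ht) (CV_mult _ _ _ _ Hh Hh)).
  by case: HN => N HN; exists N => k /HN [].
- apply: (cv_le_eventually _ (cv_const 0) (CV_mult _ _ _ _ (cv_const s) Hh)).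
  by case: HN => N HN; exists N => k /HN [].
Qed.

Lemma hd_hat_scale m a (q : Vec m.+1) : hd (vscale a (hat q)) = - (a * hd q).
Proof. by rewrite /hd /vscale /hat eqxx; ring. Qed.

Lemma tl_hat_scale m a (q : Vec m.+1) : tl (vscale a (hat q)) = vscale a (tl q).
Proof.
apply: functional_extensionality => i; rewrite /tl /vscale /hat.
by rewrite eq_sym (negbTE (neq_lift ord0 i)).
Qed.

Lemma NQ_Qstar m (q l : Vec m.+1) : NQ q l -> cone_sq (-1) l.
Proof.
case=> [[_ H]|[[_ ->]|[Hb [_ [a [Ha ->]]]]]].
- rewrite /inQstar in H; split; last by have := vnorm_ge0 (tl l); lra.
  by have := vnorm_le_sq H; lra.
- by rewrite /cone_sq /hd /vzero dot_vzero; split; lra.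
- rewrite /cone_sq hd_hat_scale tl_hat_scale dot_scale dot_scale_r -vnorm_sq Hb.
  by have := vnorm_ge0 (tl q); rewrite Hb; split; nra.
Qed.

Lemma Qstar_orth_Q_gap m (l d : Vec m.+1) : cone_sq (-1) l -> hd l < 0 -> cone_sq 1 d ->
  dot l d = 0 -> gap d = 0.
Proof.
move=> [L1 L2] Hl [D1 D2]; rewrite dot_split /gap => H0.
have CS := cauchy_schwarz (tl l) (tl d); have HD := dot_ge0 (tl d).
move: (dot (tl l) (tl l)) (dot (tl d) (tl d)) (dot (tl l) (tl d)) (hd l) (hd d)
  L1 L2 D1 D2 CS HD H0 Hl => L D P l0 d0 L1 L2 D1 D2 CS HD H0 Hl.
have HP : P = - (l0 * d0) by lra.
rewrite HP in CS.
suff : d0 * d0 <= D by lra.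
by apply: (Rmult_le_reg_l (l0 * l0)); nra.
Qed.

Lemma hat_orth_gap_ge0 m (q d : Vec m.+1) a : bdQ q -> 0 < a * hd q ->
  dot (vscale a (hat q)) d = 0 -> 0 <= gap d.
Proof.
rewrite /bdQ /gap dot_split hd_hat_scale tl_hat_scale dot_scale => Hb Hpos H0.
have CS := cauchy_schwarz (tl q) (tl d); rewrite -vnorm_sq Hb in CS.
have Hq := vnorm_ge0 (tl q); rewrite Hb in Hq.
have Ha : 0 < a by nra.
have Hq0 : 0 < hd q by nra.
have HP : dot (tl q) (tl d) = hd q * hd d by apply: (Rmult_eq_reg_l a); nra.
rewrite HP in CS.
move: (hd q) (hd d) (dot (tl d) (tl d)) CS Hq0 => q0 d0 D CS Hq0.
suff : d0 * d0 <= D by lra.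
by apply: (Rmult_le_reg_l (q0 * q0)); nra.
Qed.

Lemma quad_rank_form n m (P : 'I_m -> Vec n) (Q : Vec n) c (u : Vec n) :
  quad (fun a b => c * (vsum (fun i => P i a * P i b) - Q a * Q b)) u
  = c * (vsum (fun i => dot (P i) u * dot (P i) u) - dot Q u * dot Q u).
Proof.
rewrite /quad /dot /matvec !vsumE; set sa := enum 'I_n; set si := enum 'I_m.
have sq_expand (p : Vec n) : lsum sa (fun a => p a * u a) * lsum sa (fun a => p a * u a)
    = lsum sa (fun a => lsum sa (fun b => p a * p b * (u b * u a))).
  by rewrite lsum_prod; apply: lsum_ext => a; apply: lsum_ext => b; ring.
rewrite sq_expand (lsum_ext _ (fun i => sq_expand (P i))) lsum_swap.
rewrite -lsum_sub -lsum_mull; apply: lsum_ext => a.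
rewrite lsum_swap vsumE -lsum_mulr -lsum_sub -lsum_mull; apply: lsum_ext => b.
rewrite (lsum_mulr si (u b * u a) (fun i => P i a * P i b)).
by rewrite -[lsum si _]/(vsum (fun i : 'I_m => P i a * P i b)); ring.
Qed.

Section ConstraintSystem.
Variables (n m : nat) (g : Vec n -> Vec m.+1) (dg : Vec n -> 'I_m.+1 -> Vec n).

Lemma jacT_dot x (l : Vec m.+1) (u : Vec n) : dot (jacT dg x l) u = dot l (jacv dg x u).
Proof.
rewrite /dot /jacT /jacv !vsumE.
rewrite (lsum_ext _ (fun j => esym (lsum_mulr _ (u j) (fun i => l i * dg x i j)))) lsum_swap.
by apply: lsum_ext => i; rewrite /dot vsumE -lsum_mull; apply: lsum_ext => j; ring.
Qed.

Lemma quad_Hcurv_bd x (lam : Vec m.+1) u : bdQ (g x) -> g x <> vzero m.+1 ->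
  quad (Hcurv g dg x lam) u = - hd lam / hd (g x) * gap (jacv dg x u).
Proof.
move=> Hb Hnz; rewrite /Hcurv.
destruct excluded_middle_informative as [Hyes|Hnot]; last by case: Hnot.
exact: quad_rank_form.
Qed.

Lemma critical_complementarity x w lam u :
  Lambda g dg x w lam -> Kcone g x w u -> dot lam (jacv dg x u) = 0.
Proof. by move=> [_ Hjac] [_ Hwu]; rewrite -jacT_dot Hjac. Qed.

Lemma tangent_jacv_inQ x u : (forall i, has_grad (fun y => g y i) x (dg x i)) ->
  g x = vzero m.+1 -> Tcone g x u -> cone_sq 1 (jacv dg x u).
Proof.
move=> Hgrad Hg0 [t [vs [Ht [Ht0 [Hvs HG]]]]].
apply: (@cone_sq_closed _ _ (fun j => vscale (/ t j) (g (vadd x (vscale (t j) (vs j)))))).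
  by exists 0%N => j _; apply: cone_sq_scale; [apply/Rinv_0_lt_compat/Ht | apply/inQ_sq/HG].
move=> i; have := has_grad_dir (Hgrad i) (f_equal (fun q => q i) Hg0) Ht Ht0 Hvs.
by apply: cv_ext => j; rewrite /vscale /Rdiv Rmult_comm.
Qed.

Lemma curvature_gap_bound x w lam u c M :
  (forall i, has_grad (fun y => g y i) x (dg x i)) ->
  Lambda g dg x w lam -> Kcone g x w u -> 0 < c -> hd lam < - c ->
  quad (Hcurv g dg x lam) u <= M ->
  0 <= gap (jacv dg x u) /\ gap (jacv dg x u) <= Rmax M 0 / c * hd (g x).
Proof.
move=> Hgrad HL HK Hc Hlc HM.
have Horth := critical_complementarity HL HK.
case: (HL) => HNQ _; have HQs := NQ_Qstar HNQ.
case: HNQ => [[Hg0 _]|[[_ Hl0]|[Hb [Hnz [a [Ha Hl]]]]]].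
- have -> : gap (jacv dg x u) = 0.
    by apply: (Qstar_orth_Q_gap HQs _ (tangent_jacv_inQ Hgrad Hg0 HK.1)); lra.
  by rewrite Hg0 /hd /vzero Rmult_0_r; lra.
- by rewrite Hl0 /hd /vzero in Hlc; lra.
- have Hpos : c < a * hd (g x) by rewrite Hl hd_hat_scale in Hlc; lra.
  have Hgap : 0 <= gap (jacv dg x u).
    by apply: (hat_orth_gap_ge0 (a := a) Hb); [lra | rewrite -Hl].
  have Hg0 : 0 < hd (g x) by have := vnorm_ge0 (tl (g x)); rewrite Hb; nra.
  move: HM; rewrite quad_Hcurv_bd // Hl hd_hat_scale.
  have -> : - - (a * hd (g x)) / hd (g x) = a by field; lra.
  move=> HaM; split => //; have HM0 := Rmax_l M 0.
  apply: (Rmult_le_reg_l c) => //.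
  have -> : c * (Rmax M 0 / c * hd (g x)) = hd (g x) * Rmax M 0 by field; lra.
  nra.
Qed.

Lemma Lambda_ball_Lambda0 x w mu sigma :
  Lambda g dg x w mu -> vnorm mu <= sigma * vnorm w -> Lambda0 g dg x w mu.
Proof.
move=> HL Hmu; case: (classic (w = vzero n)) => [Hw0|Hw0]; last by right.
left; split => //; apply: vnorm_eq0.
by move: Hmu; rewrite Hw0 vnorm_vzero Rmult_0_r; have := vnorm_ge0 mu; lra.
Qed.

End ConstraintSystem.

Lemma ball_center n (xb : Vec n) r : 0 < r -> ball xb r xb.
Proof.
move=> Hr; rewrite /ball.
have -> : vsub xb xb = vzero n by apply: functional_extensionality => i; rewrite /vsub /vzero; ring.
by rewrite vnorm_vzero.
Qed.

Lemma C2_near_cv n F dF (d2F : Vec n -> Mat n) xb (x : nat -> Vec n) :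
  C2_near F dF d2F xb -> vlim x xb -> Un_cv (fun k => F (x k)) (F xb).
Proof. by move=> [r [Hr HC]] Hx; have [H1 _] := HC xb (ball_center xb Hr); apply: has_grad_cv H1 Hx. Qed.

Lemma C2_near_grad_cv n F dF (d2F : Vec n -> Mat n) xb (x : nat -> Vec n) a :
  C2_near F dF d2F xb -> vlim x xb -> Un_cv (fun k => dF (x k) a) (dF xb a).
Proof.
move=> [r [Hr HC]] Hx; have [_ [H2 _]] := HC xb (ball_center xb Hr).
exact: has_grad_cv (H2 a) Hx.
Qed.

Lemma C2_near_common_ball n p (F : 'I_p -> Vec n -> R) dF (d2F : 'I_p -> Vec n -> Mat n) xb :
  (forall i, C2_near (F i) (dF i) (d2F i) xb) ->
  exists r, 0 < r /\ forall y, ball xb r y -> forall i, has_grad (F i) y (dF i y).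
Proof.
move=> HC.
suff [r [Hr Hs]] : exists r, 0 < r /\
    forall y, ball xb r y -> forall i, i \in enum 'I_p -> has_grad (F i) y (dF i y).
  by exists r; split => // y Hy i; apply: Hs; rewrite ?mem_enum.
elim: (enum 'I_p) => [|a s [r [Hr IH]]]; first by exists 1; split => //; lra.
have [ra [Hra Ha]] := HC a.
exists (Rmin r ra); split; first exact: Rmin_pos.
move=> y Hy i; rewrite in_cons => /orP [/eqP ->|Hi].
  by apply: (Ha y _).1; rewrite /ball in Hy *; have := Rmin_r r ra; lra.
by apply: IH Hi; rewrite /ball in Hy *; have := Rmin_l r ra; lra.
Qed.

Section MultiplierLimits.
Variables (n m : nat) (g : Vec n -> Vec m.+1) (dg : Vec n -> 'I_m.+1 -> Vec n).
Variables (xb wb ut : Vec n) (lamt : Vec m.+1).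
Variables (x w u : nat -> Vec n) (lam : nat -> Vec m.+1).
Hypothesis dg_cv : forall i j, Un_cv (fun k => dg (x k) i j) (dg xb i j).
Hypothesis w_cv : forall j, Un_cv (fun k => w k j) (wb j).
Hypothesis lam_cv : vlim lam lamt.
Hypothesis u_cv : vlim u ut.
Hypothesis lam_mult : forall k, Lambda g dg (x k) (w k) (lam k).
Hypothesis u_crit : forall k, Kcone g (x k) (w k) (u k).

Lemma cv_jacv i : Un_cv (fun k => jacv dg (x k) (u k) i) (jacv dg xb ut i).
Proof. exact: (cv_dot (dg_cv i) (fun j => vlim_comp j u_cv)). Qed.

Lemma limit_Qstar : cone_sq (-1) lamt.
Proof.
apply: (cone_sq_closed _ (fun i => vlim_comp i lam_cv)).
by exists 0%N => k _; case: (lam_mult k) => /NQ_Qstar.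
Qed.

Lemma limit_in_Lambda : g xb = vzero m.+1 -> Lambda g dg xb wb lamt.
Proof.
move=> Hg0; split.
  left; split => //; case: limit_Qstar => H1 H2; apply: vnorm_le; lra.
apply: functional_extensionality => j.
apply: (UL_sequence (fun k => jacT dg (x k) (lam k) j)).
  rewrite /jacT !vsumE; apply: (@cv_lsum _ _ (fun k i => lam k i * dg (x k) i j)) => i.
  exact: CV_mult (vlim_comp i lam_cv) (dg_cv i j).
by apply: (cv_ext _ (w_cv j)) => k; case: (lam_mult k) => _ ->.
Qed.

Lemma limit_norm_bound sigma :
  (forall k, vnorm (lam k) <= sigma * vnorm (w k)) -> vnorm lamt <= sigma * vnorm wb.
Proof.
move=> Hb; apply: (cv_le_eventually _ (cv_vnorm (fun i => vlim_comp i lam_cv))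
  (CV_mult _ _ _ _ (cv_const sigma) (cv_vnorm w_cv))).
by exists 0%N => k _; apply: Hb.
Qed.

Lemma limit_complementarity : dot lamt (jacv dg xb ut) = 0.
Proof.
apply: (UL_sequence (fun k => dot (lam k) (jacv dg (x k) (u k)))).
  exact: (cv_dot (fun i => vlim_comp i lam_cv) cv_jacv).
apply: (cv_ext _ (cv_const 0)) => k.
by rewrite (critical_complementarity (lam_mult k) (u_crit k)).
Qed.

Lemma limit_curvature_gap :
  Un_cv (fun k => hd (g (x k))) 0 ->
  eventually (fun k => forall i, has_grad (fun y => g y i) (x k) (dg (x k) i)) ->
  (exists M, eventually (fun k => quad (Hcurv g dg (x k) (lam k)) (u k) <= M)) ->
  hd lamt * gap (jacv dg xb ut) = 0.
Proof.
move=> g0_cv Hgrad [M HM].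
case: limit_Qstar => _ /Rle_lt_or_eq_dec [Hneg|Hzero]; last first.
  have -> : hd lamt = 0 by lra.
  ring.
have Hlt : hd lamt < 0 by lra.
set c := - hd lamt / 2; have Hc : 0 < c by rewrite /c; lra.
have Hlam0 := cv_eventually_lt (vlim_comp ord0 lam_cv) (ltac:(rewrite /c; lra) : hd lamt < - c).
have Hbound : eventually (fun k => 0 <= gap (jacv dg (x k) (u k)) /\
    gap (jacv dg (x k) (u k)) <= Rmax M 0 / c * hd (g (x k))).
  have [N HN] := eventually_and Hgrad (eventually_and Hlam0 HM).
  by exists N => k /HN [Hg [Hl Hq]]; apply: (curvature_gap_bound Hg (lam_mult k) (u_crit k)).
have Hgap := cv_gap cv_jacv.
have Hlo : 0 <= gap (jacv dg xb ut).
  by apply: (cv_le_eventually _ (cv_const 0) Hgap); case: Hbound => N HN; exists N => k /HN [].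
have Hhi : gap (jacv dg xb ut) <= Rmax M 0 / c * 0.
  apply: (cv_le_eventually _ Hgap (CV_mult _ _ _ _ (cv_const _) g0_cv)).
  by case: Hbound => N HN; exists N => k /HN [].
have -> : gap (jacv dg xb ut) = 0 by rewrite Rmult_0_r in Hhi; lra.
ring.
Qed.

End MultiplierLimits.

Theorem lemma4p2 (n m : nat) (f : Vec n -> R) (df : Vec n -> Vec n) (d2f : Vec n -> Mat n)
  (g : Vec n -> Vec m.+1) (dg : Vec n -> 'I_m.+1 -> Vec n) (d2g : Vec n -> 'I_m.+1 -> Mat n)
  (xb : Vec n) (sigma : R)
  (x xs : nat -> Vec n) (lam : nat -> Vec m.+1) (u : nat -> Vec n)
  (lamt : Vec m.+1) (ut : Vec n) :
  n <> 0%nat -> m <> 0%nat ->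
  C2_near f df d2f xb ->
  (forall i, C2_near (fun y => g y i) (fun y => dg y i) (fun y => d2g y i) xb) ->
  g xb = vzero m.+1 ->
  0 < sigma -> MSCQ g xb sigma ->
  (forall k, Gamma g (x k)) ->
  vlim x xb -> vlim xs (vzero n) -> vlim lam lamt -> vlim u ut ->
  (forall k, LambdaDir g dg d2g (x k) (vsub (xs k) (df (x k))) (u k) (lam k) /\
             vnorm (lam k) <= sigma * vnorm (vsub (xs k) (df (x k)))) ->
  (forall k, Kcone g (x k) (vsub (xs k) (df (x k))) (u k) /\ vnorm (u k) = 1) ->
  (exists M : R, exists N : nat, forall k : nat, (N <= k)%nat ->
      quad (Hcurv g dg (x k) (lam k)) (u k) <= M) ->
  (Lambda g dg xb (vopp (df xb)) lamt /\ vnorm lamt <= sigma * vnorm (vopp (df xb))) /\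
  (forall mu, Lambda g dg xb (vopp (df xb)) mu /\ vnorm mu <= sigma * vnorm (vopp (df xb)) ->
      Lambda0 g dg xb (vopp (df xb)) mu) /\
  vnorm ut = 1 /\
  dot lamt (jacv dg xb ut) = 0 /\
  hd lamt * (vnorm (tl (jacv dg xb ut)) ^ 2 - hd (jacv dg xb ut) ^ 2) = 0.
Proof.
move=> _ _ Cf Cg gxb0 _ _ _ Hx Hxs Hlam Hu Hdir HK HM.
have dg_cv i j := C2_near_grad_cv j (Cg i) Hx.
have w_cv j : Un_cv (fun k => vsub (xs k) (df (x k)) j) (vopp (df xb) j).
  have := CV_minus _ _ _ _ (vlim_comp j Hxs) (C2_near_grad_cv j Cf Hx).
  by rewrite /vzero Rminus_0_l.
have lam_mult k := (Hdir k).1.1.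
have u_crit k := (HK k).1.
have g0_cv : Un_cv (fun k => hd (g (x k))) 0.
  by have := C2_near_cv (Cg ord0) Hx; rewrite gxb0.
have Hgrad : eventually (fun k => forall i, has_grad (fun y => g y i) (x k) (dg (x k) i)).
  have [r [Hr Hball]] := @C2_near_common_ball _ _ (fun i y => g y i) _ _ _ Cg.
  by have [N HN] := cv_eventually_lt Hx Hr; exists N => k /HN /Hball.
split; first split.
- exact: (limit_in_Lambda dg_cv w_cv Hlam lam_mult gxb0).
- exact: (limit_norm_bound w_cv Hlam (fun k => (Hdir k).2)).
split; first by move=> mu [HL Hmu]; apply: Lambda_ball_Lambda0 Hmu.
split.
  apply: (UL_sequence _ _ _ (cv_vnorm (fun i => vlim_comp i Hu))).
  by apply: (cv_ext _ (cv_const 1)) => k; rewrite (HK k).2.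
split; first exact: (limit_complementarity dg_cv Hlam Hu lam_mult u_crit).
by rewrite gap_vnorm; apply: (limit_curvature_gap dg_cv Hlam Hu lam_mult u_crit).
Qed.
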